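(* Let $m\ge2$, let $p_1,\dots,p_m>0$ with $\sum_k p_k=1$, and let $X=(X_i)_{1\le i\le n}$, $Y=(Y_i)_{1\le i\le n}$ be independent with i.i.d. letters in $\{\alpha_1,\dots,\alpha_m\}$, $\mathbb{P}(X_1=\alpha_k)=\mathbb{P}(Y_1=\alpha_k)=p_k$. Let $N_1$ be the total number of letters $\alpha_1$ in $X$ and $Y$. Define a random sequence of pairs $(X^k,Y^k)_{0\le k\le 2n}$ of words of length $n$ as follows: $X^0=(X^0_i)_{1\le i\le n}$ and $Y^0=(Y^0_i)_{1\le i\le n}$ are independent with i.i.d. letters in $\{\alpha_2,\dots,\alpha_m\}$ and $\mathbb{P}(X^0_1=\alpha_k)=\mathbb{P}(Y^0_1=\alpha_k)=p_k/(1-p_1)$, $2\le k\le m$; given $(X^0,Y^0),\dots,(X^k,Y^k)$, the pair $(X^{k+1},Y^{k+1})$ is obtained from $(X^k,Y^k)$ by choosing uniformly at random one of the $2n-k$ positions (in $X^k$ or $Y^k$) carrying a letter different from $\alpha_1$ and replacing that letter by $\alpha_1$. Assume $N_1$ is independent of $(X^k,Y^k)_{0\le k\le 2n}$. Then for $k=0,1,\dots,2n$, \[ (X^k,Y^k)\overset{d}{=}(X,Y\mid N_1=k), \] and \[ (X^{N_1},Y^{N_1})\overset{d}{=}(X,Y). \]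
   Context: $\overset{d}{=}$ denotes equality in distribution; $(X,Y\mid N_1=k)$ denotes the conditional law of $(X,Y)$ given $N_1=k$. *)

(* finite discrete probability, laws as functions on finite types. *)
From HB Require Import structures.
From mathcomp Require Import all_boot all_order all_algebra.
Set Implicit Arguments. Unset Strict Implicit. Unset Printing Implicit Defensive.
Import Order.TTheory GRing.Theory Num.Theory.
Local Open Scope ring_scope.

(* Letters alpha_1..alpha_m are the elements of 'I_m; alpha_1 is the ordinal
   with value 0.  A word of length n is a finite function 'I_n -> 'I_m, and a
   configuration is a pair of words (X, Y). *)
Definition word (n m : nat) := {ffun 'I_n -> 'I_m}.
Definition conf (n m : nat) := (word n m * word n m)%type.

Definition isA1 (m : nat) (c : 'I_m) : bool := (val c == 0)%N.

Section Defs.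
Variables (R : realFieldType) (n m : nat) (p : 'I_m -> R).

Definition p1 : R := \sum_(k : 'I_m | isA1 k) p k.

Definition lawXY (z : conf n m) : R :=
  (\prod_(i < n) p (z.1 i)) * (\prod_(i < n) p (z.2 i)).

Definition N1 (z : conf n m) : nat :=
  (#|[pred i : 'I_n | isA1 (z.1 i)]| + #|[pred i : 'I_n | isA1 (z.2 i)]|)%N.

Definition probN1 (k : nat) : R := \sum_(z : conf n m | N1 z == k) lawXY z.

Definition condlaw (k : nat) (z : conf n m) : R :=
  if N1 z == k then lawXY z / probN1 k else 0.

Definition q (c : 'I_m) : R := if isA1 c then 0 else p c / (1 - p1).

Definition mu0 (z : conf n m) : R :=
  (\prod_(i < n) q (z.1 i)) * (\prod_(i < n) q (z.2 i)).

(* positions: inl i = position i in X, inr i = position i in Y *)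
Definition letter (z : conf n m) (s : 'I_n + 'I_n) : 'I_m :=
  match s with inl i => z.1 i | inr i => z.2 i end.

Definition nonA1 (z : conf n m) : nat :=
  #|[pred s : 'I_n + 'I_n | ~~ isA1 (letter z s)]|.

Definition moves (z z' : conf n m) (s : 'I_n + 'I_n) : bool :=
  [&& ~~ isA1 (letter z s), isA1 (letter z' s) &
      [forall t, (t != s) ==> (letter z' t == letter z t)]].

Definition trans (z z' : conf n m) : R :=
  if [exists s, moves z z' s] then (nonA1 z)%:R^-1 else 0.

Fixpoint mu (k : nat) : conf n m -> R :=
  match k with
  | 0 => mu0
  | k'.+1 => fun z' => \sum_(z : conf n m) mu k' z * trans z z'
  end.

End Defs.

(* The law of (X^k, Y^k) is proportional to the law of (X, Y) restricted to
   {N_1 = k}.  For k = 0 this holds because off alpha_1 the weights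
   p_j/(1-p_1) are a constant multiple of p_j.  A predecessor of z' with
   N_1 z' = k+1 is obtained by picking one of its k+1 letters alpha_1 and
   restoring some letter c <> alpha_1 there, which multiplies the weight by
   p_c/p_1; every predecessor has 2n-k non-alpha_1 positions, so the
   transition probability is the constant 1/(2n-k), and summing over c shows
   that proportionality persists.  Total mass 1 fixes the constant, which
   gives the conditional law, and averaging over N_1 recovers (X, Y). *)
From HB Require Import structures.
From mathcomp Require Import all_boot all_order all_algebra.
From mathcomp Require Import ring.
Import Order.TTheory GRing.Theory Num.Theory.
Local Open Scope ring_scope.
Set Implicit Arguments.
Unset Strict Implicit.
Unset Printing Implicit Defensive.

Section Positions.
Variables (n m : nat).
Implicit Types (z w : conf n m) (s t : 'I_n + 'I_n).

Lemma conf_ext z w : (forall t, letter z t = letter w t) -> z = w.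
Proof.
case: z w => [x y] [x' y'] H; congr pair; apply/ffunP => i.
  exact: (H (inl i)).
exact: (H (inr i)).
Qed.

Definition set_letter z s (c : 'I_m) : conf n m :=
  match s with
  | inl i => ([ffun j => if j == i then c else z.1 j], z.2)
  | inr i => (z.1, [ffun j => if j == i then c else z.2 j])
  end.

Lemma letter_set z s c t :
  letter (set_letter z s c) t = if t == s then c else letter z t.
Proof. by case: s t => i [] j /=; rewrite ?ffunE. Qed.

Lemma N1E z : N1 z = (\sum_t isA1 (letter z t))%N.
Proof.
rewrite big_sumType /N1 /=; congr addn; rewrite -sum1_card big_mkcond /=;
  by apply: eq_bigr => i _; rewrite inE; case: (isA1 _).
Qed.

Lemma nonA1E z : nonA1 z = (\sum_t ~~ isA1 (letter z t))%N.
Proof.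
rewrite /nonA1 -sum1_card big_mkcond /=.
by apply: eq_bigr => i _; rewrite inE; case: (isA1 _).
Qed.

Lemma N1_add_nonA1 z : (N1 z + nonA1 z = 2 * n)%N.
Proof.
rewrite N1E nonA1E -big_split /=.
rewrite (eq_bigr (fun _ => 1%N)); last by move=> t _; case: (isA1 _).
by rewrite sum1_card card_sum card_ord mul2n addnn.
Qed.

Lemma nonA1_subN1 z : nonA1 z = (2 * n - N1 z)%N.
Proof. by rewrite -(N1_add_nonA1 z) addKn. Qed.

Variable a0 : 'I_m.
Hypothesis a0_A1 : isA1 a0.

Lemma isA1E c : isA1 c = (c == a0).
Proof.
apply/idP/eqP => [h|->] //; apply: val_inj; move: h a0_A1; rewrite /isA1.
by move=> /eqP -> /eqP ->.
Qed.

Lemma movesE z z' s :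
  moves z z' s = ~~ isA1 (letter z s) && (z' == set_letter z s a0).
Proof.
apply/idP/idP.
  case/and3P=> h1 h2 /forallP h3; rewrite h1 /=; apply/eqP/conf_ext => t.
  rewrite letter_set; case: eqP => [->|/eqP ne].
    by apply/eqP; rewrite -isA1E.
  by apply/eqP; move: (h3 t); rewrite ne.
case/andP=> h1 /eqP->; rewrite /moves h1 letter_set eqxx a0_A1 /=.
by apply/forallP => t; apply/implyP => ne; rewrite letter_set (negbTE ne).
Qed.

Lemma moves_revE z z' s : moves z z' s =
  [&& isA1 (letter z' s), ~~ isA1 (letter z s) &
      z == set_letter z' s (letter z s)].
Proof.
apply/idP/idP.
  case/and3P=> h1 h2 /forallP h3; rewrite h1 h2 /=; apply/eqP/conf_ext => t.
  rewrite letter_set; case: eqP => [->|/eqP ne] //.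
  by apply/esym/eqP; move: (h3 t); rewrite ne.
case/and3P=> h1 h2 /eqP hz; rewrite /moves h1 h2 /=.
by apply/forallP => t; apply/implyP => ne; rewrite hz letter_set (negbTE ne).
Qed.

Lemma moves_inj z z' s t : moves z z' s -> moves z z' t -> s = t.
Proof.
rewrite !movesE => /andP[_ /eqP e1] /andP[h2 /eqP e2].
apply/eqP; apply: contraLR h2 => ne; rewrite negbK.
have := congr1 (fun w => letter w t) e1.
by rewrite e2 /= !letter_set eqxx eq_sym (negbTE ne) => <-.
Qed.

Lemma N1_moves z z' s : moves z z' s -> N1 z' = (N1 z).+1.
Proof.
rewrite movesE => /andP[h /eqP ->].
rewrite !N1E (bigD1 s) //= [in RHS](bigD1 s) //= letter_set eqxx a0_A1.
rewrite (negbTE h) add0n; congr addn.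
by apply: eq_bigr => t ne; rewrite letter_set (negbTE ne).
Qed.

End Positions.

Section Chain.
Variables (R : realFieldType) (n m : nat) (p : 'I_m -> R).
Hypothesis p_gt0 : forall k : 'I_m, 0 < p k.
Hypothesis sum_p : \sum_(k : 'I_m) p k = 1.
Variables (a0 a1 : 'I_m).
Hypothesis a0_A1 : isA1 a0.
Hypothesis a1_nA1 : ~~ isA1 a1.
Implicit Types (z w : conf n m) (s t : 'I_n + 'I_n).

Definition lawN1 k z : R := (N1 z == k)%:R * lawXY p z.

Lemma probN1E k : probN1 n p k = \sum_z lawN1 k z.
Proof.
by rewrite /probN1 big_mkcond; apply: eq_bigr => z _; rewrite /lawN1; case: eqP;
  rewrite ?mul1r ?mul0r.
Qed.

Lemma sum_lawN1 z : \sum_(k < (2 * n).+1) lawN1 k z = lawXY p z.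
Proof.
have hN : (N1 z < (2 * n).+1)%N by rewrite ltnS -(N1_add_nonA1 z) leq_addr.
rewrite (bigD1 (Ordinal hN)) //= big1 ?addr0.
  by rewrite /lawN1 eqxx mul1r.
move=> k ne; have nek : N1 z != k.
  by apply: contra ne => /eqP e; apply/eqP/val_inj.
by rewrite /lawN1 (negbTE nek) mul0r.
Qed.

Lemma p1E : p1 p = p a0.
Proof.
by rewrite /p1 (eq_bigl (pred1 a0)) ?big_pred1_eq // => k; exact: isA1E.
Qed.

Lemma sum_p_nA1 : \sum_(c | ~~ isA1 c) p c = 1 - p1 p.
Proof.
rewrite -sum_p [\sum_(k < m) p k](bigID (@isA1 m)) /= /p1 addrAC subrr add0r.
exact: eq_bigl.
Qed.

Lemma p1_neq0 : p1 p != 0. Proof. by rewrite p1E lt0r_neq0. Qed.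

Lemma subr_p1_neq0 : 1 - p1 p != 0.
Proof.
rewrite -sum_p_nA1 (bigD1 a1) //= lt0r_neq0 // ltr_pwDl //.
by apply: sumr_ge0 => i _; exact/ltW.
Qed.

Lemma lawXYE z : lawXY p z = \prod_t p (letter z t).
Proof. by rewrite big_sumType. Qed.

Lemma mu0E z : mu0 p z = \prod_t q p (letter z t).
Proof. by rewrite big_sumType. Qed.

Lemma lawXY_set z s c : isA1 (letter z s) ->
  lawXY p (set_letter z s c) = lawXY p z * p c / p1 p.
Proof.
move=> h; apply: (canRL (mulfK p1_neq0)).
rewrite !lawXYE (bigD1 s) //= [in RHS](bigD1 s) //= letter_set eqxx.
have -> : letter z s = a0 by apply/eqP; rewrite -(isA1E a0_A1).
rewrite p1E (eq_bigr (fun t => p (letter z t))) => [|t ne]; last first.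
  by rewrite letter_set (negbTE ne).
by rewrite mulrAC [RHS]mulrC mulrA.
Qed.

Lemma transE z z' :
  trans R z z' = \sum_s (moves z z' s)%:R * (nonA1 z)%:R^-1.
Proof.
rewrite /trans -big_distrl /=; case: existsP => [[s hs]|hn].
  rewrite (bigD1 s) //= hs big1 ?addr0 ?mul1r // => t ne.
  case h: (moves z z' t) => //.
  by rewrite (moves_inj a0_A1 hs h) eqxx in ne.
rewrite big1 ?mul0r // => s _; case h: (moves z z' s) => //.
by exfalso; apply: hn; exists s.
Qed.

Lemma sum_trans z : (0 < nonA1 z)%N -> \sum_z' trans R z z' = 1.
Proof.
move=> h; under eq_bigr do rewrite transE.
rewrite exchange_big /=.
have moves_from s : \sum_z' (moves z z' s)%:R = (~~ isA1 (letter z s))%:R :> R.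
  under eq_bigr do rewrite (movesE a0_A1).
  rewrite (bigD1 (set_letter z s a0)) //= eqxx andbT big1 ?addr0 // => z' ne.
  by rewrite (negbTE ne) andbF.
under eq_bigr do rewrite -big_distrl /= moves_from.
by rewrite -big_distrl /= -natr_sum -nonA1E mulfV // pnatr_eq0 -lt0n.
Qed.

Lemma moves_to_letters z z' s : (moves z z' s)%:R =
  \sum_c ([&& isA1 (letter z' s), ~~ isA1 c & z == set_letter z' s c])%:R :> R.
Proof.
rewrite moves_revE.
case: (boolP (isA1 (letter z' s))) => h1 /=; last by rewrite big1.
case: (boolP (~~ isA1 (letter z s) && (z == set_letter z' s (letter z s)))).
  case/andP=> h2 h3; rewrite (bigD1 (letter z s)) //= h2 h3.
  rewrite big1 ?addr0 // => c ne.
  case: (boolP (z == set_letter z' s c)) => [/eqP hz|]; last by rewrite andbF.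
  by rewrite hz letter_set eqxx eqxx in ne.
move=> h; rewrite big1 // => c _.
case: (boolP (z == set_letter z' s c)) => [/eqP hz|]; last by rewrite andbF.
by rewrite hz letter_set eqxx eqxx andbT in h; rewrite (negbTE h).
Qed.

Lemma sum_moves_lawXY z' s : \sum_z (moves z z' s)%:R * lawXY p z =
  (isA1 (letter z' s))%:R * lawXY p z' * (1 - p1 p) / p1 p.
Proof.
under eq_bigr do rewrite moves_to_letters big_distrl /=.
rewrite exchange_big /=.
have sum_eq b c : \sum_z (b && (z == set_letter z' s c))%:R * lawXY p z
    = b%:R * lawXY p (set_letter z' s c).
  rewrite (bigD1 (set_letter z' s c)) //= eqxx andbT big1 ?addr0 // => z ne.
  by rewrite (negbTE ne) andbF mul0r.
under eq_bigr do under eq_bigr do rewrite andbA.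
under eq_bigr do rewrite sum_eq.
case: (boolP (isA1 (letter z' s))) => h1 /=; last first.
  by rewrite !mul0r big1 // => c _; rewrite mul0r.
rewrite (bigID (fun c => ~~ isA1 c)) /=.
rewrite [X in _ + X]big1 => [|c /negPn ->]; last by rewrite mul0r.
rewrite addr0; under eq_bigr => c hc do rewrite hc mul1r lawXY_set //.
by rewrite -sum_p_nA1 mul1r big_distrr big_distrl.
Qed.

Lemma mu0_lawN1 z : mu0 p z = ((1 - p1 p) ^+ (2 * n))^-1 * lawN1 0 z.
Proof.
rewrite mu0E /lawN1 lawXYE; case: (boolP (N1 z == 0%N)) => h.
  have hall t : ~~ isA1 (letter z t).
    by move: h; rewrite N1E sum_nat_eq0 => /forallP/(_ t); case: (isA1 _).
  rewrite mul1r; under eq_bigr do rewrite /q (negbTE (hall _)).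
  by rewrite prodf_div prodr_const card_sum card_ord mul2n addnn mulrC.
move: h; rewrite N1E sum_nat_eq0 => /forallPn [t] /= ht.
rewrite (bigD1 t) //= /q; case: (isA1 _) ht => // _.
by rewrite !mul0r mulr0.
Qed.

Lemma mu_succ_lawN1 k c : (forall z, mu p k z = c * lawN1 k z) ->
  forall z', mu p k.+1 z' =
    c * (k.+1)%:R * (1 - p1 p) / ((2 * n - k)%:R * p1 p) * lawN1 k.+1 z'.
Proof.
move=> IH z' /=.
under eq_bigr => z _ do rewrite IH transE big_distrr /=.
have step z s : c * lawN1 k z * ((moves z z' s)%:R * (nonA1 z)%:R^-1) =
    (c * (N1 z' == k.+1)%:R / (2 * n - k)%:R) * ((moves z z' s)%:R * lawXY p z).
  case hm: (moves z z' s); last by rewrite !mul0r !mulr0.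
  rewrite /lawN1 (N1_moves a0_A1 hm) eqSS nonA1_subN1; case: eqP => [->|_].
    by rewrite !mul1r !mulr1 mulrAC.
  by rewrite /= !(mul0r, mulr0).
under eq_bigr => z _ do under eq_bigr => s _ do rewrite step.
rewrite exchange_big /=.
under eq_bigr => s _ do rewrite -big_distrr /= sum_moves_lawXY.
rewrite -big_distrr /= -!big_distrl /= -natr_sum -N1E /lawN1.
case: eqP => [->|_]; last by rewrite !mulr0 !mul0r mulr0.
by rewrite invfM; ring.
Qed.

Lemma mu_lawN1 k : exists c : R, forall z, mu p k z = c * lawN1 k z.
Proof.
elim: k => [|k [c IH]]; first by eexists; exact: mu0_lawN1.
by eexists; exact: mu_succ_lawN1 IH.
Qed.

Lemma sum_q : \sum_c q p c = 1.
Proof.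
rewrite /q (bigID (@isA1 m)) /= big1 => [|c ->] //; rewrite add0r.
under eq_bigr => c h do rewrite (negbTE h).
by rewrite -big_distrl /= sum_p_nA1 mulfV // subr_p1_neq0.
Qed.

Lemma sum_mu0 : \sum_(z : conf n m) mu0 p z = 1.
Proof.
have sum_word : \sum_(x : word n m) \prod_i q p (x i) = 1.
  rewrite -(bigA_distr_bigA (fun (i : 'I_n) (c : 'I_m) => q p c)) /=.
  by rewrite big1 // => i _; rewrite sum_q.
rewrite -[LHS](pair_bigA _ (fun x y => mu0 p (x, y))) /= /mu0 /=.
under eq_bigr => x _ do rewrite -big_distrr /= sum_word mulr1.
exact: sum_word.
Qed.

Lemma sum_mu k : (k <= 2 * n)%N -> \sum_(z : conf n m) mu p k z = 1.
Proof.
elim: k => [_|k IH hk] /=; first exact: sum_mu0.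
rewrite exchange_big /=; under eq_bigr => z _ do rewrite -big_distrr /=.
rewrite -[RHS](IH (ltnW hk)); apply: eq_bigr => z _.
have [c hc] := mu_lawN1 k.
rewrite hc /lawN1; case: eqP => [e|_]; last by rewrite !(mul0r, mulr0).
by rewrite sum_trans ?mulr1 // nonA1_subN1 e subn_gt0.
Qed.

Lemma mu_lawN1_div k : (k <= 2 * n)%N ->
  probN1 n p k != 0 /\ forall z, mu p k z = lawN1 k z / probN1 n p k.
Proof.
move=> hk; have [c hc] := mu_lawN1 k.
have norm : c * probN1 n p k = 1.
  by rewrite -(sum_mu hk) probN1E big_distrr; apply: eq_bigr => z _; rewrite hc.
have hP : probN1 n p k != 0.
  by apply: contra_eq_neq norm => ->; rewrite mulr0 eq_sym oner_eq0.
split=> // z; rewrite hc mulrC; congr (_ * _).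
by rewrite -[c]mulr1 -(mulfV hP) mulrA norm mul1r.
Qed.

End Chain.

Unset Implicit Arguments.
Set Strict Implicit.

Theorem lemma2p1 (R : realFieldType) (n m : nat) (p : 'I_m -> R)
  (hm : (2 <= m)%N)
  (hpos : forall k : 'I_m, 0 < p k)
  (hsum : \sum_(k : 'I_m) p k = 1) :
  (forall k : nat, (k <= 2 * n)%N ->
     forall z : conf n m, mu p k z = condlaw p k z)
  /\
  (forall z : conf n m,
     \sum_(k < (2 * n).+1) probN1 n p k * mu p k z = lawXY p z).
Proof.
have law := mu_lawN1_div hpos hsum (n := n)
  (a0 := Ordinal (ltnW hm)) (a1 := Ordinal hm) erefl erefl.
split=> [k hk z|z].
  have [_ ->] := law k hk.
  by rewrite /condlaw /lawN1; case: eqP; rewrite ?mul1r ?mul0r.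
rewrite -(sum_lawN1 p z); apply: eq_bigr => k _.
have [hP ->] := law k (ltn_ord k).
by rewrite mulrC divfK.
Qed.
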